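(* If $\rho$ is an invariant state supported on $\Omega^\perp=\mathrm{span}\{|-\rangle,|+\rangle,\varphi_{0_1},\varphi_{0_N}\}$, then $\rho=P_-=|-\rangle\langle -|$.
   Context: Fix integers $N\ge 2$ and $n_1\ge n_2\ge\dots\ge n_N\ge 1$. Let $\mathcal H$ be a finite-dimensional complex Hilbert space with orthonormal basis $\{|-\rangle,|+\rangle\}\cup\{|a_k\rangle:1\le k\le N,\ 0\le a\le n_k-1\}$. For vectors $x,y$, $|x\rangle\langle y|$ denotes the operator $u\mapsto\langle y,u\rangle x$. Put $E_k=\mathrm{span}\{|a_k\rangle:0\le a\le n_k-1\}$, $P_k$ the orthogonal projection onto $E_k$, $P_\pm=|\pm\rangle\langle\pm|$, $\zeta_k=e^{2\pi i/n_k}$, and $\varphi_{a_k}=n_k^{-1/2}\sum_{b=0}^{n_k-1}\zeta_k^{-ba}|b_k\rangle$ for $0\le a\le n_k-1$. For $1\le k\le N-1$ let $Z_k=n_k^{-1/2}\sum_{b=0}^{n_{k+1}-1}\sum_{a=0}^{n_k-1}\zeta_k^{ba}|b_{k+1}\rangle\langle a_k|$ (an operator on $\mathcal H$), $|Z|_k=Z_k^*Z_k$. Let $\omega$ range over the set $\{\omega_+,\omega_-,\omega_1,\dots,\omega_{N-1}\}$ of (distinct) Bohr frequencies, and let $\Gamma_{\pm,\omega}>0$, $\gamma_{\pm,\omega}\in\mathbb R$ be constants. Kraus operators: $L_{-,\omega_+}=\sqrt{n_1\Gamma_{-,\omega_+}}|\varphi_{0_1}\rangle\langle +|$, $L_{+,\omega_+}=\sqrt{n_1\Gamma_{+,\omega_+}}|+\rangle\langle\varphi_{0_1}|$,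 $L_{-,\omega_k}=\sqrt{\Gamma_{-,\omega_k}}Z_k$, $L_{+,\omega_k}=\sqrt{\Gamma_{+,\omega_k}}Z_k^*$ ($1\le k\le N-1$), $L_{-,\omega_-}=\sqrt{\Gamma_{-,\omega_-}}|-\rangle\langle\varphi_{0_N}|$, $L_{+,\omega_-}=0$. Effective Hamiltonian $H_{\mathrm{eff}}=n_1\gamma_{-,\omega_+}P_+-n_1\gamma_{+,\omega_+}|\varphi_{0_1}\rangle\langle\varphi_{0_1}|+\gamma_{-,\omega_-}|\varphi_{0_N}\rangle\langle\varphi_{0_N}|-\gamma_{+,\omega_-}P_-+\sum_{k=1}^{N-1}(\gamma_{-,\omega_k}|Z|_k-\gamma_{+,\omega_k}P_{k+1})$. The generator is $\mathcal L(\rho)=-i[H_{\mathrm{eff}},\rho]+\sum_{\omega}\sum_{\epsilon=\pm}\big(L_{\epsilon,\omega}\rho L_{\epsilon,\omega}^*-\tfrac12\{L_{\epsilon,\omega}^*L_{\epsilon,\omega},\rho\}\big)$. A state is a positive operator of trace one; it is invariant if $\mathcal L(\rho)=0$; an operator is supported on a subspace $E$ if its range is contained in $E$. *)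

From HB Require Import structures.
From mathcomp Require Import all_boot all_order all_algebra.
From mathcomp Require Import all_classical all_reals all_analysis.
From mathcomp Require Import complex.
Unset Printing Implicit Defensive.
Import Order.TTheory GRing.Theory Num.Theory.
Local Open Scope ring_scope.

Section QDefs.
Variables (R : realType) (N : nat) (n : nat -> nat).
Local Notation C := R[i].

(* Orthonormal basis index: inl false = |->, inl true = |+>,
   inr (Tagged k a) = |a_k>  (k : 'I_N is 0-based: paper's k = k+1). *)
Definition site_idx := {k : 'I_N & 'I_(n k)}.
Definition idx := (bool + site_idx)%type.
Definition hdim := #|{: idx}|.

Definition toC (x : R) : C := Complex x 0.
Definition vec (f : idx -> C) : 'cV[C]_hdim := \col_j f (enum_val j).
Definition ket (i : idx) : 'cV[C]_hdim := vec (fun j => (j == i)%:R).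
Definition ket_minus := ket (inl false).
Definition ket_plus := ket (inl true).
(* |a_k> with 0-based k and a given as naturals *)
Definition ketS (k a : nat) : 'cV[C]_hdim :=
  vec (fun j => match j with
                | inl _ => 0
                | inr s => ((tag s : nat) == k) && ((tagged s : nat) == a)
                end%:R).
Definition adj p q (A : 'M[C]_(p, q)) : 'M[C]_(q, p) := map_mx Num.conj A^T.
Arguments adj {p q}.
Definition outer (x y : 'cV[C]_hdim) : 'M[C]_hdim := x *m adj y.

Definition zeta (k : nat) : C :=
  Complex (cos (2 * pi / (n k)%:R)) (sin (2 * pi / (n k)%:R)).
Definition invsqrtn (k : nat) : C := (sqrtC ((n k)%:R : C))^-1.

Definition phi (k a : nat) : 'cV[C]_hdim :=
  invsqrtn k *: \sum_(b < n k) (zeta k ^- (b * a)) *: ketS k b.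

(* Z_k (0-based k: maps E_k to E_{k+1}) *)
Definition Zop (k : nat) : 'M[C]_hdim :=
  invsqrtn k *: \sum_(b < n k.+1) \sum_(a < n k)
     (zeta k ^+ (b * a)) *: outer (ketS k.+1 b) (ketS k a).
Definition absZ (k : nat) : 'M[C]_hdim := adj (Zop k) *m Zop k.
Definition Pk (k : nat) : 'M[C]_hdim := \sum_(a < n k) outer (ketS k a) (ketS k a).
Definition Pminus : 'M[C]_hdim := outer ket_minus ket_minus.
Definition Pplus : 'M[C]_hdim := outer ket_plus ket_plus.

End QDefs.
Arguments adj {R p q}.
Arguments outer {R N n}.
Arguments vec {R N n}.

(* Bohr frequencies: omega_+, omega_-, omega_k (wk k, k 0-based: paper omega_{k+1}) *)
Inductive freq := wplus | wminus | wk of nat.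

Section Gen.
Variables (R : realType) (N : nat) (n : nat -> nat).
Variables (Gm Gp gm gp : freq -> R).
Local Notation C := R[i].
Local Notation d := (hdim N n).
Local Notation toC := (toC R).

Definition sq (x : R) : C := toC (Num.sqrt x).
Definition n1 : R := (n 0)%:R.
Definition phi01 := phi R N n 0 0.
Definition phi0N := phi R N n N.-1 0.

Definition L_m_plus : 'M[C]_d := sq (n1 * Gm wplus) *: outer phi01 (ket_plus R N n).
Definition L_p_plus : 'M[C]_d := sq (n1 * Gp wplus) *: outer (ket_plus R N n) phi01.
Definition L_m_k (k : nat) : 'M[C]_d := sq (Gm (wk k)) *: Zop R N n k.
Definition L_p_k (k : nat) : 'M[C]_d := sq (Gp (wk k)) *: adj (Zop R N n k).
Definition L_m_minus : 'M[C]_d := sq (Gm wminus) *: outer (ket_minus R N n) phi0N.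
Definition L_p_minus : 'M[C]_d := 0.

Definition Heff : 'M[C]_d :=
  toC (n1 * gm wplus) *: Pplus R N n
  - toC (n1 * gp wplus) *: outer phi01 phi01
  + toC (gm wminus) *: outer phi0N phi0N
  - toC (gp wminus) *: Pminus R N n
  + \sum_(k < N.-1) (toC (gm (wk k)) *: absZ R N n k - toC (gp (wk k)) *: Pk R N n k.+1).

Definition dissip (L rho : 'M[C]_d) : 'M[C]_d :=
  L *m rho *m adj L - 2^-1 *: (adj L *m L *m rho + rho *m (adj L *m L)).

Definition generator (rho : 'M[C]_d) : 'M[C]_d :=
  - 'i *: (Heff *m rho - rho *m Heff)
  + dissip L_m_plus rho + dissip L_p_plus rho
  + \sum_(k < N.-1) (dissip (L_m_k k) rho + dissip (L_p_k k) rho)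
  + dissip L_m_minus rho + dissip L_p_minus rho.

End Gen.
Arguments generator {R N n}.

Definition positive_op (R : realType) (N : nat) (n : nat -> nat)
  (A : 'M[R[i]]_(hdim N n)) : Prop :=
  forall v : 'cV[R[i]]_(hdim N n), 0 <= (adj v *m A *m v) 0 0.

Definition is_state (R : realType) (N : nat) (n : nat -> nat)
  (A : 'M[R[i]]_(hdim N n)) : Prop :=
  positive_op R N n A /\ \tr A = 1.

(* range of A contained in the span of the rows of S (i.e. column space of A
   = row space of A^T, inside the row space spanned by S) *)
Definition supported_on (R : realType) (N : nat) (n : nat -> nat) m
  (A : 'M[R[i]]_(hdim N n)) (S : 'M[R[i]]_(m, hdim N n)) : Prop :=
  (A^T <= S)%MS.

Definition Omega_perp (R : realType) (N : nat) (n : nat -> nat)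
  : 'M[R[i]]_(1 + 1 + (1 + 1), hdim N n) :=
  col_mx (col_mx (ket_minus R N n)^T (ket_plus R N n)^T)
         (col_mx (phi01 R N n)^T (phi0N R N n)^T).

From HB Require Import structures.
From mathcomp Require Import all_boot all_order all_algebra.
From mathcomp Require Import all_classical all_reals all_analysis.
From mathcomp Require Import complex.
From mathcomp Require Import ring lra.
Import Order.TTheory GRing.Theory Num.Theory.
Local Open Scope ring_scope.

(* Let rho be an invariant state and x a vector at which the
   Hamiltonian part and the anticommutator parts of the generator vanish,
   e.g. x in ker rho, or x = |->, which every Kraus operator annihilates and
   which is an eigenvector of H_eff.  Then
     0 = <x| L(rho) |x> = sum_L <L^* x| rho |L^* x>,
   a sum of nonnegative terms, so every L^* x lies in ker rho.  Starting from
   |-> this puts phi_{0_N} in ker rho.  Since rho is supported on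
   span{|->, |+>, phi_{0_1}, phi_{0_N}}, the vector |0_2>, orthogonal to the
   remaining three, is then in ker rho; Z_1^* |0_2> is proportional to
   phi_{0_1}, and L_{-,w+}^* phi_{0_1} to |+>.  Hence rho = |-> r for a row r,
   and positivity with trace one force rho = |-><-|. *)

Section Adjoint.
Context {R : realType}.
Local Notation C := R[i].

Lemma adj_mul {p q r} (A : 'M[C]_(p, q)) (B : 'M[C]_(q, r)) :
  adj (A *m B) = adj B *m adj A.
Proof. by rewrite /adj trmx_mul map_mxM. Qed.

Lemma adjK {p q} (A : 'M[C]_(p, q)) : adj (adj A) = A.
Proof. by apply/matrixP => i j; rewrite !mxE conjCK. Qed.

Lemma adj_add {p q} (A B : 'M[C]_(p, q)) : adj (A + B) = adj A + adj B.
Proof. by apply/matrixP => i j; rewrite !mxE rmorphD. Qed.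

Lemma adj0 p q : adj (0 : 'M[C]_(p, q)) = 0.
Proof. by apply/matrixP => i j; rewrite !mxE rmorph0. Qed.

Lemma adj_scale {p q} c (A : 'M[C]_(p, q)) : adj (c *: A) = c^* *: adj A.
Proof. by apply/matrixP => i j; rewrite !mxE rmorphM. Qed.

Lemma adj_sum {p q} (I : Type) (r : seq I) (P : pred I) (F : I -> 'M[C]_(p, q)) :
  adj (\sum_(i <- r | P i) F i) = \sum_(i <- r | P i) adj (F i).
Proof. exact: (big_morph _ adj_add (adj0 p q)). Qed.

Lemma adj_delta {p q} (i : 'I_p) (j : 'I_q) :
  adj (delta_mx i j : 'M[C]_(p, q)) = delta_mx j i.
Proof. by apply/matrixP => a b; rewrite !mxE rmorph_nat andbC. Qed.

Context {d : nat}.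
Implicit Types (A B : 'M[C]_d) (u v x y : 'cV[C]_d).

Definition braket u v : C := (adj u *m v) 0 0.
Definition qform A x : C := (adj x *m A *m x) 0 0.
Definition psd A : Prop := forall v, 0 <= qform A v.

Lemma adj_mulmx_braket u v : adj u *m v = (braket u v)%:M.
Proof. exact: mx11_scalar. Qed.

Lemma adj_mulmx_outer u v (r : 'rV[C]_d) : adj u *m (v *m r) = braket u v *: r.
Proof. by rewrite mulmxA adj_mulmx_braket mul_scalar_mx. Qed.

Lemma braketC u v : braket v u = (braket u v)^*.
Proof. by rewrite /braket -[in LHS](adjK u) -adj_mul [in LHS]mxE mxE. Qed.

Lemma braketZr u v c : braket u (c *: v) = c * braket u v.
Proof. by rewrite /braket -scalemxAr mxE. Qed.

Lemma braketZl u v c : braket (c *: u) v = c^* * braket u v.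
Proof. by rewrite /braket adj_scale -scalemxAl mxE. Qed.

Lemma braket_sumr (I : Type) (r : seq I) (P : pred I) (F : I -> 'cV[C]_d) u :
  braket u (\sum_(i <- r | P i) F i) = \sum_(i <- r | P i) braket u (F i).
Proof. by rewrite /braket mulmx_sumr summxE. Qed.

Lemma braket_suml (I : Type) (r : seq I) (P : pred I) (F : I -> 'cV[C]_d) u :
  braket (\sum_(i <- r | P i) F i) u = \sum_(i <- r | P i) braket (F i) u.
Proof. by rewrite /braket adj_sum mulmx_suml summxE. Qed.

Lemma braket_deltal (j : 'I_d) u : braket (delta_mx j 0) u = u j 0.
Proof.
rewrite /braket adj_delta mxE (bigD1 j) //= mxE !eqxx mul1r big1 ?addr0 // => i ne.
by rewrite mxE (negbTE ne) mul0r.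
Qed.

Lemma mulmx_scale_eq0 {p} {A : 'M[C]_(p, d)} {c v} :
  c != 0 -> A *m (c *: v) = 0 -> A *m v = 0.
Proof. by move=> c0; rewrite -scalemxAr => /eqP; rewrite scalemx_eq0 (negbTE c0) => /eqP. Qed.

Lemma mulmx_delta_col p (A : 'M[C]_(p, d)) (j : 'I_d) i :
  (A *m delta_mx j (0 : 'I_1)) i 0 = A i j.
Proof.
rewrite mxE (bigD1 j) //= mxE !eqxx mulr1 big1 ?addr0 // => k ne.
by rewrite mxE (negbTE ne) mulr0.
Qed.

Lemma qform_addZ A x y c : qform A (x + c *: y) =
  qform A x + (c * (adj x *m A *m y) 0 0 + c^* * (adj y *m A *m x) 0 0
  + c^* * c * qform A y).
Proof.
by rewrite /qform adj_add adj_scale !mulmxDl !mulmxDr -!scalemxAl -!scalemxAr !mxE; ring.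
Qed.

Lemma qformDl A B x : qform (A + B) x = qform A x + qform B x.
Proof. by rewrite /qform mulmxDr mulmxDl mxE. Qed.

Lemma qformZl c A x : qform (c *: A) x = c * qform A x.
Proof. by rewrite /qform -scalemxAr -scalemxAl mxE. Qed.

Lemma qformNl A x : qform (- A) x = - qform A x.
Proof. by rewrite -scaleN1r qformZl mulN1r. Qed.

Lemma qform0l x : qform (0 : 'M[C]_d) x = 0.
Proof. by rewrite /qform mulmx0 mul0mx mxE. Qed.

Lemma qform_suml (I : Type) (r : seq I) (P : pred I) (F : I -> 'M[C]_d) x :
  qform (\sum_(i <- r | P i) F i) x = \sum_(i <- r | P i) qform (F i) x.
Proof. exact: (big_morph (qform^~ x) (fun A B => qformDl A B x) (qform0l x)). Qed.

Lemma qform_mull_eq0 A B x : adj x *m A = 0 -> qform (A *m B) x = 0.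
Proof. by move=> xA; rewrite /qform !mulmxA xA !mul0mx mxE. Qed.

Lemma qform_mulr_eq0 A B x : B *m x = 0 -> qform (A *m B) x = 0.
Proof. by move=> Bx; rewrite /qform -!mulmxA Bx !mulmx0 mxE. Qed.

End Adjoint.

Section NonnegQuadratic.
Variable R : rcfType.

Lemma quadratic_ge0_linear_eq0 (u c : R) :
  0 <= c -> (forall t, 0 <= t * u + t ^+ 2 * c) -> u = 0.
Proof.
move=> c_ge0 /(_ (- u / (c + 1))); set t := - u / (c + 1) => q_ge0.
have tc : t * (c + 1) = - u by rewrite /t mulfVK // gt_eqF // ltr_wpDl.
have : (t * u + t ^+ 2 * c) * (c + 1) ^+ 2 = - u ^+ 2.
  transitivity ((t * (c + 1)) * u * (c + 1) + (t * (c + 1)) ^+ 2 * c); first by ring.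
  by rewrite tc; ring.
have : 0 <= (t * u + t ^+ 2 * c) * (c + 1) ^+ 2 by rewrite mulr_ge0 ?sqr_ge0.
move=> + eq; rewrite eq oppr_ge0 => u2_le0.
by apply/eqP; rewrite -sqrf_eq0 eq_le u2_le0 sqr_ge0.
Qed.

Lemma sesquilinear_ge0_eq0 (a b c : R[i]) : 0 <= c ->
  (forall z : R[i], 0 <= z * a + z^* * b + z^* * z * c) -> a = 0 /\ b = 0.
Proof.
case: a b c => [a1 a2] [b1 b2] [c1 c2]; rewrite lecE /= => /andP[/eqP -> c1_ge0] H.
have re_sum : a1 + b1 = 0.
  apply: (quadratic_ge0_linear_eq0 _ _ c1_ge0) => t.
  by move: (H (Complex t 0)); rewrite lecE /= => /andP[_]; congr (_ <= _); ring.
have im_diff : b2 - a2 = 0.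
  apply: (quadratic_ge0_linear_eq0 _ _ c1_ge0) => t.
  by move: (H (Complex 0 t)); rewrite lecE /= => /andP[_]; congr (_ <= _); ring.
move: (H (Complex 1 0)); rewrite lecE /= => /andP[/eqP im1 _].
move: (H (Complex 0 1)); rewrite lecE /= => /andP[/eqP imi _].
have -> : a1 = 0 by lra.
have -> : a2 = 0 by lra.
have -> : b1 = 0 by lra.
by have -> : b2 = 0 by lra.
Qed.

End NonnegQuadratic.

Section Psd.
Context {R : realType} {d : nat} {A : 'M[R[i]]_d}.
Hypothesis A_psd : psd A.
Implicit Types (x : 'cV[R[i]]_d).

Lemma psd_qform_eq0 {x} : qform A x = 0 -> A *m x = 0 /\ adj x *m A = 0.
Proof.
move=> Ax0.
have entry j : (adj x *m A) 0 j = 0 /\ (A *m x) j 0 = 0.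
  pose y : 'cV[R[i]]_d := delta_mx j 0.
  have [] := @sesquilinear_ge0_eq0 _
    ((adj x *m A *m y) 0 0) ((adj y *m A *m x) 0 0) _ (A_psd y).
    by move=> z; move: (A_psd (x + z *: y)); rewrite qform_addZ Ax0 add0r.
  rewrite mulmx_delta_col => -> Axj; split=> //.
  by move: Axj; rewrite -mulmxA -/(braket _ (A *m x)) braket_deltal.
split; apply/matrixP => i j; rewrite [RHS]mxE.
  by rewrite (ord1 j); case: (entry i).
by rewrite (ord1 i); case: (entry j).
Qed.

Lemma psd_mulmx_eq0 {x} : A *m x = 0 -> adj x *m A = 0.
Proof.
by move=> Ax0; apply: (proj2 (psd_qform_eq0 _)); rewrite /qform -mulmxA Ax0 mulmx0 mxE.
Qed.

Lemma psd_mulmx_eq0l {x} : adj x *m A = 0 -> A *m x = 0.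
Proof.
by move=> xA0; apply: (proj1 (psd_qform_eq0 _)); rewrite /qform xA0 mul0mx mxE.
Qed.

Lemma psd_tr1_delta_mul (j : 'I_d) (r : 'rV_d) :
  \tr A = 1 -> A = delta_mx j 0 *m r -> A = delta_mx j j.
Proof.
move=> trA1 EA.
have r_off i : i != j -> r 0 i = 0.
  move=> ij; have : A *m delta_mx i (0 : 'I_1) = 0.
    apply: psd_mulmx_eq0l; rewrite EA mulmxA adj_mulmx_braket braket_deltal.
    by rewrite mxE (negbTE ij) /= mul_scalar_mx scale0r.
  by move/matrixP/(_ j 0); rewrite EA mulmx_delta_col !mxE big_ord1 mxE !eqxx mul1r.
have r_diag : r 0 j = 1.
  rewrite -trA1 EA /mxtrace (bigD1 j) //= big1 => [|i ij].
    by rewrite mxE big_ord1 mxE !eqxx mul1r addr0.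
  by rewrite mxE big_ord1 mxE (negbTE ij) mul0r.
rewrite EA -[X in _ = X](mul_delta_mx (0 : 'I_1)); congr (_ *m _).
apply/matrixP => i k; rewrite (ord1 i) mxE eqxx /=.
by case: (eqVneq k j) => [->|kj]; rewrite ?r_diag ?r_off.
Qed.

End Psd.

Section LeftRightEigen.
Context {R : realType} {d : nat}.
Local Notation C := R[i].
Implicit Types (A B H rho : 'M[C]_d) (v : 'cV[C]_d).

Definition lr_eigen H v := exists c, H *m v = c *: v /\ adj v *m H = c *: adj v.

Lemma lr_eigenD A B v : lr_eigen A v -> lr_eigen B v -> lr_eigen (A + B) v.
Proof.
move=> [a [Av vA]] [b [Bv vB]]; exists (a + b).
by rewrite mulmxDl mulmxDr Av Bv vA vB !scalerDl.
Qed.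

Lemma lr_eigenN A v : lr_eigen A v -> lr_eigen (- A) v.
Proof.
move=> [a [Av vA]]; exists (- a).
by rewrite mulNmx mulmxN Av vA !scaleNr.
Qed.

Lemma lr_eigenZ c A v : lr_eigen A v -> lr_eigen (c *: A) v.
Proof.
move=> [a [Av vA]]; exists (c * a).
by rewrite -scalemxAl -scalemxAr Av vA !scalerA.
Qed.

Lemma lr_eigen_sum (I : Type) (r : seq I) (P : pred I) (F : I -> 'M[C]_d) v :
  (forall i, P i -> lr_eigen (F i) v) -> lr_eigen (\sum_(i <- r | P i) F i) v.
Proof.
move=> HF; elim/big_rec: _ => [|i A Pi]; last exact/lr_eigenD/HF.
by exists 0; rewrite mul0mx mulmx0 !scale0r.
Qed.

Lemma lr_eigen_adj_mul A v : A *m v = 0 -> lr_eigen (adj A *m A) v.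
Proof.
move=> Av; exists 0; rewrite !scale0r -mulmxA Av mulmx0.
by rewrite mulmxA -adj_mul Av adj0 mul0mx.
Qed.

Lemma lr_eigen_qform H rho v : lr_eigen H v -> qform (H *m rho) v = qform (rho *m H) v.
Proof.
move=> [c [Hv vH]].
by rewrite /qform mulmxA vH -!mulmxA Hv -!scalemxAl -!scalemxAr !mxE.
Qed.

End LeftRightEigen.

Section Hilbert.
Variables (R : realType) (N : nat) (n : nat -> nat).
Local Notation C := R[i].
Local Notation d := (hdim N n).
Local Notation ket := (ket R N n).
Local Notation ketS := (ketS R N n).
Local Notation phi := (phi R N n).
Local Notation Zop := (Zop R N n).
Implicit Types (u v w : 'cV[C]_d) (i j : idx N n) (f g : idx N n -> C).

Lemma vec_rank f i : vec f (enum_rank i) 0 = f i.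
Proof. by rewrite mxE enum_rankK. Qed.

Lemma braket_vec f g :
  braket (vec f) (vec g) = \sum_(t < d) (f (enum_val t))^* * g (enum_val t).
Proof. by rewrite /braket mxE; apply: eq_bigr => t _; rewrite !mxE. Qed.

Lemma ket_delta i : ket i = delta_mx (enum_rank i) 0.
Proof.
apply/matrixP => j k; rewrite !mxE (ord1 k) eqxx andbT.
by rewrite -(inj_eq enum_val_inj) enum_rankK.
Qed.

Lemma braket_ketl i v : braket (ket i) v = v (enum_rank i) 0.
Proof. by rewrite ket_delta braket_deltal. Qed.

Lemma braket_ketr v i : braket v (ket i) = (v (enum_rank i) 0)^*.
Proof. by rewrite braketC braket_ketl. Qed.

Lemma ketS_ket {k a} (hk : (k < N)%N) (ha : (a < n k)%N) :
  ketS k a = ket (inr (Tagged (fun k : 'I_N => 'I_(n k)) (Ordinal ha : 'I_(n (Ordinal hk))))).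
Proof.
apply/matrixP => j z; rewrite !mxE; case: (enum_val j) => [//|[k' a']] /=.
congr (nat_of_bool _ )%:R; apply/andP/eqP => [[/eqP ek /eqP ea] | E].
  have ek' : k' = Ordinal hk by apply: val_inj.
  by move: a' ea; rewrite ek' => a' ea; have -> : a' = Ordinal ha by apply: val_inj.
split; apply/eqP.
  exact: (congr1 (fun i : idx N n => if i is inr s then val (tag s) else 0%N) E).
exact: (congr1 (fun i : idx N n => if i is inr s then val (tagged s) else 0%N) E).
Qed.

Lemma braket_ketS k a b : (k < N)%N -> (b < n k)%N ->
  braket (ketS k a) (ketS k b) = (a == b)%:R.
Proof.
by move=> hk hb; rewrite (ketS_ket hk hb) braket_ketr vec_rank /= eqxx conjC_nat eq_sym.
Qed.

Lemma braket_ketS_neq k k' a b : k != k' -> braket (ketS k a) (ketS k' b) = 0.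
Proof.
move=> kk'; rewrite braket_vec big1 // => t _; case: (enum_val t) => [_|s] /=.
  by rewrite conjC0 mul0r.
case: (val (tag s) =P k) => [sk|_] /=; last by rewrite conjC0 mul0r.
by rewrite (_ : val (tag s) == k' = false) ?mulr0 // sk (negbTE kk').
Qed.

Lemma braket_ketS_inl k a b : braket (ketS k a) (ket (inl b)) = 0.
Proof. by rewrite braket_ketr vec_rank conjC0. Qed.

Lemma braket_ket i j : braket (ket i) (ket j) = (i == j)%:R.
Proof. by rewrite braket_ketl vec_rank. Qed.

Lemma phi0E k : phi k 0 = invsqrtn R n k *: \sum_(b < n k) ketS k b.
Proof.
congr (_ *: _); apply: eq_bigr => b _.
by rewrite muln0 expr0 invr1 scale1r.
Qed.

Lemma braket_phi_inl k a b : braket (phi k a) (ket (inl b)) = 0.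
Proof.
rewrite braketZl braket_suml big1 ?mulr0 // => c _.
by rewrite braketZl braket_ketS_inl mulr0.
Qed.

Lemma braket_inl_phi k a b : braket (ket (inl b)) (phi k a) = 0.
Proof. by rewrite braketC braket_phi_inl conjC0. Qed.

Lemma braket_phi_neq k k' a b : k != k' -> braket (phi k a) (phi k' b) = 0.
Proof.
move=> kk'; rewrite braketZl braketZr !braket_suml big1 ?mulr0 // => c _.
rewrite braketZl braket_sumr big1 ?mulr0 // => c' _.
by rewrite braketZr braket_ketS_neq ?mulr0.
Qed.

Lemma braket_ketS_phi_neq k k' a b : k != k' -> braket (ketS k a) (phi k' b) = 0.
Proof.
move=> kk'; rewrite braketZr braket_sumr big1 ?mulr0 // => c _.
by rewrite braketZr braket_ketS_neq ?mulr0.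
Qed.

Lemma invsqrtn_neq0 k : (0 < n k)%N -> invsqrtn R n k != 0.
Proof. by move=> nk; rewrite invr_eq0 sqrtC_eq0 pnatr_eq0 -lt0n. Qed.

Lemma braket_phi0_neq0 k : (k < N)%N -> (0 < n k)%N -> braket (phi k 0) (phi k 0) != 0.
Proof.
move=> hk nk; rewrite phi0E braketZl braketZr braket_suml.
have -> : \sum_(b < n k) braket (ketS k b) (\sum_(c < n k) ketS k c) = (n k)%:R.
  rewrite -[n k in RHS]card_ord -sumr_const; apply: eq_bigr => b _.
  rewrite braket_sumr (bigD1 b) //= braket_ketS // eqxx big1 ?addr0 // => c cb.
  have bc : (b : nat) != c by rewrite eq_sym.
  by rewrite braket_ketS // (negbTE bc).
by rewrite !mulf_neq0 ?conjC_eq0 ?invsqrtn_neq0 // pnatr_eq0 -lt0n.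
Qed.

Lemma outer_mulmx u v w : outer u v *m w = braket v w *: u.
Proof. by rewrite /outer -mulmxA adj_mulmx_braket mul_mx_scalar. Qed.

Lemma adj_outer u v : adj (outer u v) = outer v u.
Proof. by rewrite /outer adj_mul adjK. Qed.

Lemma lr_eigen_outer_self v : lr_eigen (outer v v) v.
Proof.
exists (braket v v); split; first exact: outer_mulmx.
by rewrite /outer mulmxA adj_mulmx_braket mul_scalar_mx.
Qed.

Lemma lr_eigen_outer_orth u v : braket u v = 0 -> lr_eigen (outer u u) v.
Proof.
move=> uv; exists 0; rewrite !scale0r outer_mulmx uv scale0r; split=> //.
by rewrite /outer mulmxA adj_mulmx_braket braketC uv conjC0 mul_scalar_mx scale0r.
Qed.

Lemma Zop_mul_inl k b : Zop k *m ket (inl b) = 0.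
Proof.
rewrite /Zop -scalemxAl mulmx_suml big1 ?scaler0 // => c _.
rewrite mulmx_suml big1 // => a _.
by rewrite -scalemxAl outer_mulmx braket_ketS_inl scale0r scaler0.
Qed.

Lemma adjZop_mul_inl k b : adj (Zop k) *m ket (inl b) = 0.
Proof.
rewrite /Zop adj_scale adj_sum -scalemxAl mulmx_suml big1 ?scaler0 // => c _.
rewrite adj_sum mulmx_suml big1 // => a _.
by rewrite adj_scale adj_outer -scalemxAl outer_mulmx braket_ketS_inl scale0r scaler0.
Qed.

Lemma adjZop_ketS_succ0 k : (k.+1 < N)%N -> (0 < n k.+1)%N ->
  adj (Zop k) *m ketS k.+1 0 = (invsqrtn R n k)^* *: \sum_(a < n k) ketS k a.
Proof.
move=> hk nk; rewrite /Zop adj_scale adj_sum -scalemxAl mulmx_suml; congr (_ *: _).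
rewrite (bigD1 (Ordinal nk)) //= [X in _ + X]big1 => [|b b0].
  rewrite addr0 adj_sum mulmx_suml; apply: eq_bigr => a _.
  rewrite adj_scale adj_outer -scalemxAl outer_mulmx braket_ketS //.
  by rewrite mul0n expr0 conjC1 !scale1r.
rewrite adj_sum mulmx_suml big1 // => a _.
rewrite adj_scale adj_outer -scalemxAl outer_mulmx braket_ketS //.
by rewrite (_ : (b == 0 :> nat) = false) ?scale0r ?scaler0 //; apply/negbTE.
Qed.

End Hilbert.

Arguments braket_phi0_neq0 {R N n k}.

Lemma big_pairs_cat {V : zmodType} {T : Type} (f : T -> V) x0 a b c e
    (F G : nat -> T) K :
  x0 + f a + f b + \sum_(k < K) (f (F k) + f (G k)) + f c + f e =
  x0 + \sum_(t <- [:: a; b] ++ flatten [seq [:: F k; G k] | k <- index_iota 0 K]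
                ++ [:: c; e]) f t.
Proof.
rewrite !big_cat !big_cons !big_nil big_flatten /= big_map big_mkord !addr0 !addrA.
by congr (_ + _ + _ + _); apply: eq_bigr => k _; rewrite !big_cons big_nil addr0.
Qed.

Section Lindblad.
Variables (R : realType) (N : nat) (n : nat -> nat) (Gm Gp gm gp : freq -> R).
Local Notation C := R[i].
Local Notation d := (hdim N n).
Local Notation ket_minus := (ket_minus R N n).
Local Notation Heff := (Heff R N n gm gp).
Local Notation dissip := (dissip R N n).
Implicit Types (L A rho : 'M[C]_d) (x : 'cV[C]_d).

Lemma Heff_lr_eigen_minus : lr_eigen Heff ket_minus.
Proof.
apply: lr_eigenD; last first.
  apply: lr_eigen_sum => k _; apply: lr_eigenD.
    by apply/lr_eigenZ/lr_eigen_adj_mul/Zop_mul_inl.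
  by apply/lr_eigenN/lr_eigenZ/lr_eigen_sum => a _; apply/lr_eigen_outer_orth/braket_ketS_inl.
apply: lr_eigenD; last by apply/lr_eigenN/lr_eigenZ/lr_eigen_outer_self.
apply: lr_eigenD; last by apply/lr_eigenZ/lr_eigen_outer_orth/braket_phi_inl.
apply: lr_eigenD; first by apply/lr_eigenZ/lr_eigen_outer_orth/braket_ket.
by apply/lr_eigenN/lr_eigenZ/lr_eigen_outer_orth/braket_phi_inl.
Qed.

Definition kraus_ops : seq 'M[C]_d :=
  [:: L_m_plus R N n Gm; L_p_plus R N n Gp]
  ++ flatten [seq [:: L_m_k R N n Gm k; L_p_k R N n Gp k] | k <- index_iota 0 N.-1]
  ++ [:: L_m_minus R N n Gm; L_p_minus R N n].

Lemma generator_kraus rho : generator Gm Gp gm gp rho =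
  - 'i *: (Heff *m rho - rho *m Heff) + \sum_(L <- kraus_ops) dissip L rho.
Proof. exact: (big_pairs_cat (dissip^~ rho)). Qed.

Lemma L_m_plus_kraus : L_m_plus R N n Gm \in kraus_ops.
Proof. by rewrite mem_head. Qed.

Lemma L_m_minus_kraus : L_m_minus R N n Gm \in kraus_ops.
Proof. by rewrite !mem_cat; apply/or3P; apply: Or33; apply: mem_head. Qed.

Lemma L_m_k_kraus k : (k < N.-1)%N -> L_m_k R N n Gm k \in kraus_ops.
Proof.
move=> hk; rewrite !mem_cat; apply/or3P; apply: Or32; apply/flattenP.
exists [:: L_m_k R N n Gm k; L_p_k R N n Gp k]; last exact: mem_head.
by rewrite map_f // mem_index_iota.
Qed.

Lemma kraus_ops_mul_minus L : L \in kraus_ops -> L *m ket_minus = 0.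
Proof.
rewrite !mem_cat => /or3P[| /flattenP[Ls /mapP[k _ ->]] |]; rewrite !inE => /orP[] /eqP ->.
- by rewrite -scalemxAl outer_mulmx braket_ket scale0r scaler0.
- by rewrite -scalemxAl outer_mulmx braket_phi_inl scale0r scaler0.
- by rewrite -scalemxAl Zop_mul_inl scaler0.
- by rewrite -scalemxAl adjZop_mul_inl scaler0.
- by rewrite -scalemxAl outer_mulmx braket_phi_inl scale0r scaler0.
- by rewrite mul0mx.
Qed.

Lemma qform_dissip L rho x : qform (dissip L rho) x =
  qform rho (adj L *m x)
  - 2^-1 * (qform (adj L *m L *m rho) x + qform (rho *m (adj L *m L)) x).
Proof. by rewrite /dissip qformDl qformNl qformZl qformDl /qform adj_mul adjK !mulmxA. Qed.

Lemma qform_dissip_ker L rho x : rho *m x = 0 -> adj x *m rho = 0 ->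
  qform (dissip L rho) x = qform rho (adj L *m x).
Proof.
move=> rx xr.
by rewrite qform_dissip qform_mulr_eq0 // qform_mull_eq0 // addr0 mulr0 subr0.
Qed.

Lemma qform_dissip_annihilated L rho x : L *m x = 0 ->
  qform (dissip L rho) x = qform rho (adj L *m x).
Proof.
move=> Lx; rewrite qform_dissip qform_mull_eq0 ?qform_mulr_eq0 ?addr0 ?mulr0 ?subr0 //.
  by rewrite -mulmxA Lx mulmx0.
by rewrite mulmxA -adj_mul Lx adj0 mul0mx.
Qed.

Lemma qform_lindblad H rho (s : seq 'M[C]_d) x :
  qform (H *m rho) x = qform (rho *m H) x ->
  (forall L, L \in s -> qform (dissip L rho) x = qform rho (adj L *m x)) ->
  qform (- 'i *: (H *m rho - rho *m H) + \sum_(L <- s) dissip L rho) x =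
  \sum_(L <- s) qform rho (adj L *m x).
Proof.
move=> Hsym Hs; rewrite qformDl qformZl qformDl qformNl Hsym subrr mulr0 add0r.
by rewrite qform_suml; apply: eq_big_seq.
Qed.

End Lindblad.

Arguments kraus_ops_mul_minus {R N n Gm Gp L}.
Arguments L_m_k_kraus {R N n Gm Gp k}.
Arguments L_m_plus_kraus {R N n Gm Gp}.
Arguments L_m_minus_kraus {R N n Gm Gp}.

Lemma sq_neq0 (R : realType) (x : R) : 0 < x -> sq R x != 0.
Proof. by move=> x_gt0; apply/eqP => -[] /eqP; rewrite sqrtr_eq0 leNgt x_gt0. Qed.

Section Invariant.
Context {R : realType} {N : nat} {n : nat -> nat} {Gm Gp gm gp : freq -> R}.
Hypotheses (HN : (2 <= N)%N) (Hpos : forall k, (k < N)%N -> (1 <= n k)%N).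
Hypothesis HGm : forall w, 0 < Gm w.
Context {rho : 'M[R[i]]_(hdim N n)}.
Hypotheses (rho_psd : psd rho) (rho_inv : generator Gm Gp gm gp rho = 0).
Local Notation kraus_ops := (kraus_ops R N n Gm Gp).
Local Notation Heff := (Heff R N n gm gp).
Implicit Types (x : 'cV[R[i]]_(hdim N n)) (L : 'M[R[i]]_(hdim N n)).

Lemma invariant_adj_kraus_eq0 x :
  qform (Heff *m rho) x = qform (rho *m Heff) x ->
  (forall L, L \in kraus_ops -> qform (dissip R N n L rho) x = qform rho (adj L *m x)) ->
  forall L, L \in kraus_ops -> rho *m (adj L *m x) = 0.
Proof.
move=> Hsym Hdiss L HL; apply: (proj1 (psd_qform_eq0 rho_psd _)).
have /eqP := congr1 (qform^~ x) rho_inv.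
rewrite /= generator_kraus qform_lindblad // qform0l psumr_eq0 => [|L' _]; last exact: rho_psd.
by move/allP/(_ L HL)/eqP.
Qed.

Lemma ker_adj_kraus {x L} : rho *m x = 0 ->
  L \in kraus_ops -> rho *m (adj L *m x) = 0.
Proof.
move=> rx; have xr := psd_mulmx_eq0 rho_psd rx.
apply: invariant_adj_kraus_eq0 => [|L' _]; last exact: qform_dissip_ker.
by rewrite qform_mulr_eq0 // qform_mull_eq0.
Qed.

Lemma minus_adj_kraus {L} : L \in kraus_ops -> rho *m (adj L *m ket_minus R N n) = 0.
Proof.
apply: invariant_adj_kraus_eq0 => [|L' HL'].
  exact: lr_eigen_qform (Heff_lr_eigen_minus _ _ _ _ _).
exact: qform_dissip_annihilated (kraus_ops_mul_minus HL').
Qed.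

Local Notation m := (ket_minus R N n).
Local Notation p := (ket_plus R N n).
Local Notation f := (phi01 R N n).
Local Notation g := (phi0N R N n).

Lemma Omega_perp_decomp : supported_on R N n _ rho (Omega_perp R N n) ->
  exists r1 r2 r3 r4 : 'rV_(hdim N n), rho = m *m r1 + p *m r2 + (f *m r3 + g *m r4).
Proof.
move=> /submxP[D rhoT]; rewrite -[rho]trmxK rhoT trmx_mul /Omega_perp !tr_col_mx !trmxK.
rewrite -[D^T]vsubmxK -[usubmx D^T]vsubmxK -[dsubmx D^T]vsubmxK !mul_row_col.
by do 4!eexists.
Qed.

Lemma rho_phi0N_eq0 : rho *m g = 0.
Proof.
have := minus_adj_kraus L_m_minus_kraus.
rewrite /L_m_minus adj_scale adj_outer -scalemxAl outer_mulmx braket_ket eqxx scale1r.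
by apply: mulmx_scale_eq0; rewrite conjC_eq0 sq_neq0.
Qed.

Context {r1 r2 r3 r4 : 'rV[R[i]]_(hdim N n)}.
Hypothesis rhoE : rho = m *m r1 + p *m r2 + (f *m r3 + g *m r4).

Lemma adj_mulmx_decomp y : adj y *m rho =
  braket y m *: r1 + braket y p *: r2 + (braket y f *: r3 + braket y g *: r4).
Proof. by rewrite rhoE !mulmxDr !adj_mulmx_outer. Qed.

Lemma N_gt0 : (0 < N)%N. Proof. exact: leq_trans HN. Qed.

Lemma coef_phi0N_eq0 : r4 = 0.
Proof.
have predN_lt : (N.-1 < N)%N by rewrite prednK ?N_gt0.
have predN_neq0 : (N.-1 != 0)%N by rewrite -lt0n -ltnS prednK ?N_gt0.
have /eqP := psd_mulmx_eq0 rho_psd rho_phi0N_eq0.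
rewrite adj_mulmx_decomp !braket_phi_inl braket_phi_neq // !scale0r !add0r scalemx_eq0.
by rewrite (negbTE (braket_phi0_neq0 predN_lt (Hpos _ predN_lt))) => /eqP.
Qed.

Lemma rho_ketS10_eq0 : rho *m ketS R N n 1 0 = 0.
Proof.
apply: (psd_mulmx_eq0l rho_psd).
rewrite adj_mulmx_decomp coef_phi0N_eq0 !braket_ketS_inl braket_ketS_phi_neq //.
by rewrite !scale0r scaler0 !addr0.
Qed.

Lemma rho_phi01_eq0 : rho *m f = 0.
Proof.
have predN_gt0 : (0 < N.-1)%N by rewrite -ltnS prednK ?N_gt0.
have := ker_adj_kraus rho_ketS10_eq0 (L_m_k_kraus predN_gt0).
rewrite /L_m_k adj_scale -scalemxAl adjZop_ketS_succ0 ?Hpos //.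
have Gm0 : (sq R (Gm (wk 0)))^* != 0 by rewrite conjC_eq0 sq_neq0.
have s0 : (invsqrtn R n 0)^* != 0 by rewrite conjC_eq0 invsqrtn_neq0 ?Hpos ?N_gt0.
move/(mulmx_scale_eq0 Gm0)/(mulmx_scale_eq0 s0).
by rewrite /phi01 phi0E -scalemxAr => ->; rewrite scaler0.
Qed.

Lemma coef_phi01_eq0 : r3 = 0.
Proof.
have /eqP := psd_mulmx_eq0 rho_psd rho_phi01_eq0.
rewrite adj_mulmx_decomp coef_phi0N_eq0 !braket_phi_inl.
rewrite !scale0r scaler0 !add0r addr0 scalemx_eq0.
by rewrite (negbTE (braket_phi0_neq0 N_gt0 (Hpos _ N_gt0))) => /eqP.
Qed.

Lemma rho_plus_eq0 : rho *m p = 0.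
Proof.
have := ker_adj_kraus rho_phi01_eq0 L_m_plus_kraus.
rewrite /L_m_plus adj_scale adj_outer -scalemxAl outer_mulmx.
have Gm0 : (sq R (n1 R n * Gm wplus))^* != 0.
  by rewrite conjC_eq0 sq_neq0 // mulr_gt0 // ltr0n Hpos ?N_gt0.
by move/(mulmx_scale_eq0 Gm0)/(mulmx_scale_eq0 (braket_phi0_neq0 N_gt0 (Hpos _ N_gt0))).
Qed.

Lemma coef_plus_eq0 : r2 = 0.
Proof.
have := psd_mulmx_eq0 rho_psd rho_plus_eq0.
by rewrite adj_mulmx_decomp !braket_ket !braket_inl_phi /= !scale0r scale1r add0r !addr0.
Qed.

End Invariant.

Theorem theorem3p25 (R : realType) (N : nat) (n : nat -> nat)
  (HN : (2 <= N)%N)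
  (Hmono : forall k l : nat, (k <= l)%N -> (l < N)%N -> (n l <= n k)%N)
  (Hpos : forall k : nat, (k < N)%N -> (1 <= n k)%N)
  (Gm Gp gm gp : freq -> R)
  (HGm : forall w, 0 < Gm w) (HGp : forall w, 0 < Gp w)
  (rho : 'M[R[i]]_(hdim N n)) :
  is_state R N n rho ->
  generator Gm Gp gm gp rho = 0 ->
  supported_on R N n _ rho (Omega_perp R N n) ->
  rho = Pminus R N n.
Proof.
move=> [rho_psd rho_tr] rho_inv /Omega_perp_decomp[r1 [r2 [r3 [r4 rhoE]]]].
have r4_0 := coef_phi0N_eq0 HN Hpos HGm rho_psd rho_inv rhoE.
have r3_0 := coef_phi01_eq0 HN Hpos HGm rho_psd rho_inv rhoE.
have r2_0 := coef_plus_eq0 HN Hpos HGm rho_psd rho_inv rhoE.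
rewrite /Pminus /outer /ket_minus ket_delta adj_delta mul_delta_mx.
apply: (psd_tr1_delta_mul rho_psd _ r1 rho_tr).
by rewrite rhoE r2_0 r3_0 r4_0 !mulmx0 !addr0 /ket_minus ket_delta.
Qed.
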